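(* Both \textsc{Greedy Min-Sum} and \textsc{Greedy Min-Max} have competitive ratio $\Omega(n)$ with respect to the \textsc{Min-Max} objective, where $n$ is the number of agents.
   Context: An instance $\mathcal{I}=(N,P,T,(\mathbf{D}_i)_{i\in N})$ has agents $N=[n]$, projects $P=\{p_1,\dots,p_m\}$, timesteps $T=[\ell]$, and disapproval sets $D_{ik}\subseteq P$. An outcome is $\mathbf{o}\in P^\ell$, $\mathbf{o}^{(k)}=(o_1,\dots,o_k)$, $d_i(\mathbf{o}^{(k)})=|\{t\in[k]:o_t\in D_{it}\}|$, $d_i(\mathbf{o})=d_i(\mathbf{o}^{(\ell)})$. An online algorithm chooses each $o_k$ based only on $(D_{it})_{i\in N,t\in[k]}$. \textsc{Greedy Min-Sum} picks at each timestep $k$ a project minimizing $|\{i:p\in D_{ik}\}|$ (ties broken lexicographically by $p_1,\dots,p_m$). \textsc{Greedy Min-Max} picks at each timestep $k$ a project $o_k$ minimizing $\max_{i\in N}d_i(\mathbf{o}^{(k)})$ given the already chosen $o_1,\dots,o_{k-1}$ (ties broken lexicographically). The competitive ratio of an online algorithm $\mathcal{B}$ with respect to \textsc{Min-Max} is $\sup_{\mathcal{I}}\frac{\max_i d_i(\mathcal{B}(\mathcal{I}))}{\min_{\mathbf{o}}\max_i d_i(\mathbf{o})}$, considered as a function of $n$. *)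

From mathcomp Require Import all_boot.
Set Implicit Arguments. Unset Strict Implicit. Unset Printing Implicit Defensive.

(* An instance with agents N = 'I_n, projects P = 'I_m.+1 (nonempty, ordered
   p_1 < ... < p_m by ordinal order), timesteps T = 'I_l, and disapproval sets
   D t i = D_{i t} (a subset of P). *)
Section Defs.
Variables (n m l : nat).
Notation agent := 'I_n.
Notation project := 'I_m.+1.
Notation time := 'I_l.
Notation instance := (time -> agent -> {set project}).
Notation outcome := {ffun time -> project}.

(* d_i(o^(k)) : number of timesteps t < k (0-based) where o_t is disapproved by i *)
Definition dis_prefix (D : instance) (o : outcome) (k : nat) (i : agent) : nat :=
  #|[set t : time | (t < k) && (o t \in D t i)]|.

Definition dis (D : instance) (o : outcome) (i : agent) : nat :=
  dis_prefix D o l i.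

(* max_i d_i(o) (0 if there are no agents) *)
Definition maxdis (D : instance) (o : outcome) : nat := \max_(i < n) dis D o i.

Definition lexargmin (F : project -> nat) : project :=
  odflt ord0 [pick p | [forall q, (F p < F q) || ((F p == F q) && (p <= q))]].

Definition minmax_opt (D : instance) : nat :=
  maxdis D [arg min_(o < [ffun=> ord0] : outcome) maxdis D o].

Definition greedy_minsum (D : instance) : outcome :=
  [ffun k => lexargmin (fun p => #|[set i | p \in D k i]|)].

Definition set_at (o : outcome) (k : nat) (p : project) : outcome :=
  [ffun t => if val t == k then p else o t].

Fixpoint greedy_minmax_aux (D : instance) (k : nat) : outcome :=
  match k with
  | 0 => [ffun=> ord0]
  | k'.+1 =>
      let o := greedy_minmax_aux D k' in
      set_at o k'
        (lexargmin (fun p => \max_(i < n) dis_prefix D (set_at o k' p) k'.+1 i))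
  end.

Definition greedy_minmax (D : instance) : outcome := greedy_minmax_aux D l.

End Defs.

(* Algorithm B has competitive ratio Omega(n) w.r.t. Min-Max: there is a constant
   c > 0 (ratio >= n / c) such that for all large enough n there is an instance
   with n agents whose ratio  maxdis(B(I)) / OPT  is at least n / c
   (with x / 0 = +oo for x > 0). *)
Definition omega_n_ratio
  (B : forall n m l, ('I_l -> 'I_n -> {set 'I_m.+1}) -> {ffun 'I_l -> 'I_m.+1}) : Prop :=
  exists c : nat, 0 < c /\ exists n0 : nat, forall n : nat, n0 <= n ->
    exists (m l : nat) (D : 'I_l -> 'I_n -> {set 'I_m.+1}),
      0 < maxdis D (B n m l D) /\ n * minmax_opt D <= c * maxdis D (B n m l D).

(* Both greedy rules break ties towards p_1, so it suffices to build, for n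
   agents and n timesteps, an instance on two projects where p_1 is always a
   tied greedy choice yet one agent disapproves p_1 at every timestep, while
   p_2 is disapproved by agent t only at timestep t.  Greedy then has Min-Max
   value n, whereas always choosing p_2 has Min-Max value 1. *)

From mathcomp Require Import all_boot.

Lemma lexargmin_ord0 m (F : 'I_m.+1 -> nat) :
  (forall q, F ord0 <= F q) -> lexargmin F = ord0.
Proof.
move=> F0_min; rewrite /lexargmin; case: pickP => [p /forallP p_min | //=].
apply/val_inj; case/orP: (p_min ord0) => [|/andP[_]]; first by rewrite ltnNge F0_min.
by rewrite leqn0 => /eqP.
Qed.

Section Disapprovals.

Context {n m l : nat} (D : 'I_l -> 'I_n -> {set 'I_m.+1}).
Implicit Type o : {ffun 'I_l -> 'I_m.+1}.

Lemma minmax_opt_le o : minmax_opt D <= maxdis D o.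
Proof. by rewrite /minmax_opt; case: arg_minnP => // x _; apply. Qed.

Lemma dis_prefix_le_card o k i : dis_prefix D o k i <= #|[set t : 'I_l | t < k]|.
Proof. by apply/subset_leq_card/subsetP => t; rewrite !inE => /andP[]. Qed.

Lemma dis_prefix_full o k i :
  (forall t : 'I_l, t < k -> o t \in D t i) ->
  dis_prefix D o k i = #|[set t : 'I_l | t < k]|.
Proof.
move=> all_dis; apply: eq_card => t; rewrite !inE.
by case: ltnP => // /all_dis ->.
Qed.

Lemma maxdis_ge_full o (a : 'I_n) : (forall t, o t \in D t a) -> l <= maxdis D o.
Proof.
move=> all_dis; apply: leq_trans (leq_bigmax a).
rewrite /dis dis_prefix_full => [|t _]; last exact: all_dis.
by rewrite (eq_card (B := predT)) ?card_ord // => t; rewrite !inE ltn_ord.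
Qed.

Lemma maxdis_le1 o :
  (forall i t t', o t \in D t i -> o t' \in D t' i -> t = t') -> maxdis D o <= 1.
Proof.
move=> once; apply/bigmax_leqP => i _; apply/card_le1_eqP => t t'.
by rewrite !inE => /andP[_ dis_t] /andP[_ dis_t']; exact: (once _ _ _ dis_t' dis_t).
Qed.

End Disapprovals.

Lemma omega_n_ratio_of_gap
    (B : forall n m l, ('I_l -> 'I_n -> {set 'I_m.+1}) -> {ffun 'I_l -> 'I_m.+1}) :
  (forall n, exists m l (D : 'I_l -> 'I_n.+1 -> {set 'I_m.+1}),
     n.+1 <= maxdis D (B n.+1 m l D) /\ exists o, maxdis D o <= 1) ->
  omega_n_ratio B.
Proof.
move=> gap; exists 1; split=> //; exists 1 => -[//|n] _.
have [m [l [D [B_large [o o_good]]]]] := gap n.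
exists m, l, D; split; first exact: leq_trans B_large.
rewrite mul1n (leq_trans _ B_large) // -[X in _ <= X]muln1 leq_mul //.
exact: leq_trans (minmax_opt_le D o) o_good.
Qed.

Section Traps.

Variable n : nat.

Definition minsum_trap (t i : 'I_n.+1) : {set 'I_2} :=
  [set p | i == if p == ord0 then ord0 else t].

Definition minmax_trap (t i : 'I_n.+1) : {set 'I_2} :=
  if i == t then setT else [set ord0].

Lemma greedy_minsum_trap : greedy_minsum minsum_trap = [ffun=> ord0].
Proof.
apply/ffunP => t; rewrite !ffunE; apply: lexargmin_ord0 => q.
suff one_disapprover p : #|[set i | p \in minsum_trap t i]| = 1 by rewrite !one_disapprover.
apply/eqP/cards1P; exists (if p == ord0 then ord0 else t).
by apply/setP => i; rewrite !inE.
Qed.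

Lemma greedy_minmax_aux_trap k :
  k <= n.+1 -> greedy_minmax_aux minmax_trap k = [ffun=> ord0].
Proof.
elim: k => [//|k IHk] lt_k_n /=; rewrite IHk ?(ltnW lt_k_n) //.
have set_at_ord0 : set_at [ffun=> ord0] k ord0 = [ffun=> ord0] :> {ffun 'I_n.+1 -> 'I_2}.
  by apply/ffunP => t; rewrite !ffunE if_same.
rewrite lexargmin_ord0 // => q; rewrite set_at_ord0.
(* Agent k disapproves every project at time k, so whatever q is chosen he
   reaches the largest possible count #|[set t | t < k.+1]|. *)
apply: leq_trans (leq_bigmax (Ordinal lt_k_n)).
apply/bigmax_leqP => i _; apply: leq_trans (dis_prefix_le_card _ _ _ _) _.
rewrite dis_prefix_full // => t _; rewrite !ffunE /minmax_trap -val_eqE /= eq_sym.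
by case: eqP; rewrite !inE.
Qed.

Lemma maxdis_ord_max_le1 (D : 'I_n.+1 -> 'I_n.+1 -> {set 'I_2}) :
  (forall t i, (ord_max \in D t i) = (i == t)) -> maxdis D [ffun=> ord_max] <= 1.
Proof.
move=> D_max; apply: maxdis_le1 => i t t'; rewrite !ffunE !D_max.
by move=> /eqP <- /eqP.
Qed.

End Traps.

Theorem proposition3 :
  omega_n_ratio greedy_minsum /\ omega_n_ratio greedy_minmax.
Proof.
split; apply: omega_n_ratio_of_gap => n; exists 1, n.+1.
- exists (minsum_trap n); split.
    rewrite greedy_minsum_trap; apply: (maxdis_ge_full _ _ ord0) => t.
    by rewrite ffunE inE.
  by exists [ffun=> ord_max]; apply: maxdis_ord_max_le1 => t i; rewrite inE.
- exists (minmax_trap n); split.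
    rewrite /greedy_minmax greedy_minmax_aux_trap //; apply: (maxdis_ge_full _ _ ord0) => t.
    by rewrite ffunE /minmax_trap; case: ifP; rewrite inE.
  exists [ffun=> ord_max]; apply: maxdis_ord_max_le1 => t i.
  by rewrite /minmax_trap; case: ifP; rewrite inE.
Qed.
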